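(* Let $(X_n)_{n\ge0}$ be a homogeneous Markov chain on $\mathbb{R}^d$ satisfying assumptions $(\mathcal{A}_1)$ and $(\mathcal{A}_2)$ below. Then for any $0<\epsilon<\epsilon_0$ and any integer $k\ge1$, $$\sup_{x\in\mathbb{M}}\mathbb{P}_\mu\Big(\min_{1\le i\le k}\|X_i-x\|>\epsilon\Big)\le(1-\kappa\epsilon^bV_d)^k.$$
   Context: $(\mathcal{A}_1)$: the chain has an invariant probability measure $\mu$ with compact support $\mathbb{M}$. $(\mathcal{A}_2)$: the transition kernel $K(x,\cdot)=\mathbb{P}(X_1\in\cdot\mid X_0=x)$, $x\in\mathbb{M}$, satisfies $K(x,dy)=k(x,y)\nu(dy)$ for a positive measure $\nu$ on $\mathbb{M}$ and a positive function $k$; for some $b>0$ and $\epsilon_0>0$, $V_d:=\inf_{x\in\mathbb{M}}\inf_{0<\epsilon<\epsilon_0}\epsilon^{-b}\nu(B(x,\epsilon)\cap\mathbb{M})>0$; and there is $\kappa>0$ with $\inf_{x,y\in\mathbb{M}}k(x,y)\ge\kappa$. $B(x,\epsilon)$ is the closed Euclidean ball. $\mathbb{P}_\mu$ denotes probability when $X_0$ has distribution $\mu$. *)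

(* State space R^d is modelled as d.-tuple R,
   equipped with the library's product (= Borel) sigma-algebra. *)
From mathcomp Require Import all_boot all_algebra.
From mathcomp Require Import all_classical all_reals all_analysis.
Set Implicit Arguments. Unset Strict Implicit. Unset Printing Implicit Defensive.
Import GRing.Theory Num.Theory.
Local Open Scope classical_set_scope.
Local Open Scope ring_scope.

Section Defs.
Variables (R : realType) (d : nat).
Local Notation E := (d.-tuple R).

Definition euclid_dist (x y : E) : R :=
  Num.sqrt (\sum_(i < d) (tnth x i - tnth y i) ^+ 2).

Definition euclid_ball (x : E) (eps : R) : set E := [set y | euclid_dist x y <= eps].

Definition euclid_open (U : set E) : Prop :=
  forall x, U x -> exists e : R, 0 < e /\ [set y | euclid_dist x y < e] `<=` U.

Definition euclid_compact (M : set E) : Prop :=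
  forall (I : Type) (U : I -> set E), (forall i, euclid_open (U i)) ->
    M `<=` \bigcup_i U i ->
    exists F : set I, finite_set F /\ M `<=` \bigcup_(i in F) U i.

Definition msupport (mu : {measure set E -> \bar R}) : set E :=
  [set x | forall e : R, 0 < e -> (0 < mu (euclid_ball x e))%E].

Definition kernel_invariant (mu : {measure set E -> \bar R}) (K : R.-pker E ~> E) : Prop :=
  forall A : set E, measurable A -> (\int[mu]_x K x A)%E = mu A.

Fixpoint mc_iter (K : R.-pker E ~> E) (As : seq (set E)) (x : E) : \bar R :=
  match As with
  | [::] => 1%E
  | A :: As' => (\int[K x]_(y in A) mc_iter K As' y)%E
  end.

(* X is a homogeneous Markov chain on (Omega, P) with initial law mu and
   transition kernel K: characterised by its finite-dimensional distributions
   P(X_0 in A_0, X_1 in A_1, ..., X_n in A_n)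
     = int_{A_0} mu(dx0) int_{A_1} K(x0,dx1) ... int_{A_n} K(x_{n-1},dxn) 1. *)
Definition markov_chain {d0 : measure_display} {Omega : measurableType d0}
  (P : probability Omega R) (X : nat -> Omega -> E)
  (mu : probability E R) (K : R.-pker E ~> E) : Prop :=
  (forall n, measurable_fun setT (X n)) /\
  forall (A0 : set E) (As : seq (set E)),
    measurable A0 -> (forall A, A \in As -> measurable A) ->
    P [set w | A0 (X 0%N w) /\
               forall i, (i < size As)%N -> nth setT As i (X i.+1 w)]
    = (\int[mu]_(x in A0) mc_iter K As x)%E.

Definition Vd (nu : {measure set E -> \bar R}) (M : set E) (b eps0 : R) : \bar R :=
  ereal_inf [set v | exists x (eps : R), M x /\ (0 < eps < eps0)%R /\
     v = ((eps `^ (- b))%:E * nu (euclid_ball x eps `&` M))%E].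

End Defs.

(* For [y] in the support [M] of [mu], the density bound gives
   [K y (B x eps) >= kappa * nu (B x eps `&` M) >= kappa * eps ^ b * V_d =: c],
   so from any point of [M] one step of the chain avoids the ball with
   probability at most [1 - c].  Both [K y] (through its density) and [mu]
   are carried by [M]: the complement of the support is the countable union of
   the [mu]-null rational boxes.  Integrating the one-step bound along the
   finite-dimensional distributions of the chain therefore gives [(1 - c) ^ k]. *)

From mathcomp Require Import all_boot all_order all_algebra.
From mathcomp Require Import all_classical all_reals all_analysis.
From mathcomp Require Import measurable_realfun lra.
Import Order.TTheory GRing.Theory Num.Theory.
Set Implicit Arguments. Unset Strict Implicit. Unset Printing Implicit Defensive.
Local Open Scope classical_set_scope.
Local Open Scope ring_scope.

Section euclidean_balls.
Variables (R : realType) (d : nat).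
Local Notation E := (d.-tuple R).
Implicit Types (x y : E) (e r : R).

Lemma euclid_distC x y : euclid_dist x y = euclid_dist y x.
Proof.
rewrite /euclid_dist; congr Num.sqrt; apply: eq_bigr => i _.
by rewrite -sqrrN opprB.
Qed.

Lemma ler_coord_euclid_dist x y i : `|tnth x i - tnth y i| <= euclid_dist x y.
Proof.
rewrite /euclid_dist -sqrtr_sqr ler_sqrt; last first.
  by rewrite sumr_ge0 // => j _; exact: sqr_ge0.
by rewrite (bigD1 i) //= lerDl sumr_ge0 // => j _; exact: sqr_ge0.
Qed.

Lemma euclid_dist_le_coord x y r : 0 <= r ->
  (forall i, `|tnth x i - tnth y i| <= r) -> euclid_dist x y <= Num.sqrt d%:R * r.
Proof.
move=> r0 xyr; rewrite /euclid_dist -[r in _ * r]ger0_norm // -sqrtr_sqr -sqrtrM //.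
rewrite ler_sqrt ?mulr_ge0 ?sqr_ge0 //.
have coord_sqr i : (tnth x i - tnth y i) ^+ 2 <= r ^+ 2.
  by rewrite -real_normK ?num_real // ler_sqr ?nnegrE ?xyr.
apply: le_trans (ler_sum _ (fun i _ => coord_sqr i)) _.
by rewrite big_const_ord iter_addr_0 mulr_natl.
Qed.

Lemma euclid_ballE x e : 0 <= e ->
  euclid_ball x e = [set y | \sum_(i < d) (tnth x i - tnth y i) ^+ 2 <= e ^+ 2].
Proof.
move=> e0; apply: eq_set => y.
by rewrite /euclid_dist -{1}(ger0_norm e0) -sqrtr_sqr ler_sqrt // sqr_ge0.
Qed.

Lemma measurable_euclid_ball x e : 0 <= e -> measurable (euclid_ball x e).
Proof.
move=> e0; rewrite euclid_ballE //.
have mdist : measurable_fun setT (fun y : E => \sum_(i < d) (tnth x i - tnth y i) ^+ 2).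
  apply: measurable_sum => i; apply: measurable_funX.
  by apply: measurable_funB => //; exact: measurable_tnth.
have := mdist measurableT _ (measurable_itv `]-oo, e ^+ 2]).
by rewrite setTI; congr measurable; apply/seteqP; split => y /=; rewrite in_itv.
Qed.

End euclidean_balls.

Section rational_boxes.
Variables (R : realType) (d : nat).
Local Notation E := (d.-tuple R).

Definition rat_box (q : d.-tuple rat) (m : nat) : set E :=
  [set y | forall i, `|tnth y i - ratr (tnth q i)| < m.+1%:R^-1].

Lemma measurable_rat_box q m : measurable (rat_box q m).
Proof.
set r : R := m.+1%:R^-1.
have -> : rat_box q m = \bigcap_(i in [set: 'I_d])
    ((fun y : E => tnth y i) @^-1` `](ratr (tnth q i) - r), (ratr (tnth q i) + r)[).
  apply/seteqP; split => y /=.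
    by move=> yq i _ /=; rewrite in_itv /= -ltr_distlC distrC.
  by move=> yq i; have /= := yq i I; rewrite in_itv /= -ltr_distlC distrC.
apply: fin_bigcap_measurable; first exact: finite_finset.
move=> i _; have := measurable_tnth i measurableT (measurable_itv
  `](ratr (tnth q i) - r), (ratr (tnth q i) + r)[).
by rewrite setTI.
Qed.

Lemma rat_box_nbhs (y : E) q m : rat_box q m y ->
  exists2 e : R, 0 < e & euclid_ball y e `<=` rat_box q m.
Proof.
move=> yq; set r : R := m.+1%:R^-1.
pose gap i := (r - `|tnth y i - ratr (tnth q i)|) / 2.
exists (\big[Num.min/1]_(i < d) gap i).
  apply: (big_ind (fun v => 0 < v)) => // [a b a0 b0|i _]; first by rewrite lt_min a0 b0.
  by rewrite divr_gt0 // subr_gt0; exact: yq.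
move=> z yz i; rewrite /euclid_ball /= in yz.
have : \big[Num.min/1]_(i < d) gap i <= gap i by exact: bigmin_le.
have := ler_coord_euclid_dist y z i.
have := yq i; rewrite -/r /gap.
move: (\big[Num.min/1]_(i < d) gap i) (euclid_dist y z) yz => e D yz.
move: (tnth y i) (tnth z i) (ratr (tnth q i) : R) => a c t.
have /andP[? ?] : - `|a - t| <= a - t <= `|a - t| by rewrite -ler_norml.
rewrite !ltr_norml ler_norml => /andP[? ?] /andP[? ?] ?.
by apply/andP; split; lra.
Qed.

Lemma rat_box_approx (x : E) (e : R) : 0 < e ->
  exists q m, rat_box q m x /\ rat_box q m `<=` euclid_ball x e.
Proof.
move=> e0; pose m := Num.truncn (2 * Num.sqrt d%:R / e); pose r : R := m.+1%:R^-1.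
have r0 : 0 < r by rewrite invr_gt0.
have re : Num.sqrt d%:R * (2 * r) <= e.
  have := truncnS_gt (2 * Num.sqrt d%:R / e); rewrite -/m ltr_pdivrMr // => /ltW.
  by rewrite mulrA [_ * 2]mulrC /r ler_pdivrMr ?ltr0Sn // [e * _]mulrC.
have hq i : exists q : rat, ratr q \in `](tnth x i - r), (tnth x i + r)[.
  by apply: rat_in_itvoo; lra.
pose q := [tuple projT1 (cid (hq i)) | i < d].
have xq : rat_box q m x.
  by move=> i; rewrite tnth_mktuple; case: cid => /= qi; rewrite in_itv /= ltr_distlC.
exists q, m; split => // y yq; rewrite /euclid_ball /=.
apply: le_trans re; apply: euclid_dist_le_coord => [|i]; first by rewrite mulr_ge0 ?ltW.
have := yq i; have := xq i; rewrite -/r !ltr_norml ler_norml => /andP[? ?] /andP[? ?].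
by apply/andP; split; lra.
Qed.

End rational_boxes.

Section measure_support.
Variables (R : realType) (d : nat) (mu : {measure set (d.-tuple R) -> \bar R}).
Local Notation E := (d.-tuple R).

(* [unpickle] enumerates all pairs [(q, m)], hence all rational boxes. *)
Definition null_rat_box (n : nat) : set E :=
  if unpickle n is Some (q, m) then
    if pselect (mu (rat_box q m) = 0%E) then rat_box q m else set0
  else set0.

Lemma measurable_null_rat_box n : measurable (null_rat_box n).
Proof.
rewrite /null_rat_box; case: (unpickle n) => [[q m]|] //.
by case: pselect => qnull; [exact: measurable_rat_box|exact: measurable0].
Qed.

Lemma null_rat_box0 n : mu (null_rat_box n) = 0%E.
Proof.
rewrite /null_rat_box; case: (unpickle n) => [[q m]|]; last exact: measure0.
by case: pselect => [qnull|qpos]; [exact: qnull|exact: measure0].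
Qed.

Lemma msupportC_bigcup : ~` msupport mu = \bigcup_n null_rat_box n.
Proof.
apply/seteqP; split => x /=.
  move=> /existsNP[e /not_implyP[e0 /negP]]; rewrite -leNgt => ball0.
  have [q [m [xq qball]]] := rat_box_approx x e0.
  exists (pickle (q, m)) => //; rewrite /null_rat_box pickleK.
  case: pselect => // -[]; apply/le_anti; rewrite measure_ge0 andbT.
  apply: le_trans ball0; apply: le_measure qball; rewrite inE.
    exact: measurable_rat_box.
  exact: measurable_euclid_ball (ltW e0).
move=> [n _]; rewrite /null_rat_box; case: (unpickle n) => [[q m]|] //.
case: pselect => //= qnull xq xsupp.
have [e e0 ballq] := rat_box_nbhs xq.
have := xsupp e e0; rewrite ltNge => /negP; apply; rewrite -qnull.
apply: le_measure ballq; rewrite inE; last exact: measurable_rat_box.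
exact: measurable_euclid_ball (ltW e0).
Qed.

Lemma measurable_msupport : measurable (msupport mu).
Proof.
rewrite -[msupport mu]setCK msupportC_bigcup; apply: measurableC.
exact: bigcupT_measurable measurable_null_rat_box.
Qed.

Lemma msupportC_null : mu (~` msupport mu) = 0%E.
Proof.
have [N [mN N0 sub]] : mu.-negligible (\bigcup_n null_rat_box n).
  apply: negligible_bigcup => n; exists (null_rat_box n); split => //.
  - exact: measurable_null_rat_box.
  - exact: null_rat_box0.
rewrite msupportC_bigcup; apply: (subset_measure0 _ mN sub N0).
exact: bigcupT_measurable measurable_null_rat_box.
Qed.

End measure_support.

Section measure_bounds.
Local Open Scope ereal_scope.
Variables (R : realType) (d0 : measure_display) (T : measurableType d0).
Variable m : {measure set T -> \bar R}.

Lemma ge0_integral_le_conull (D S : set T) (f : T -> \bar R) (C : R) :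
  measurable D -> measurable S -> m (D `&` ~` S) = 0 ->
  measurable_fun setT f -> (forall x, 0 <= f x) -> (0 <= C)%R ->
  (forall x, D x -> S x -> f x <= C%:E) ->
  \int[m]_(x in D) f x <= C%:E * m (D `&` S).
Proof.
move=> mD mS DS0 mf f0 C0 fC.
have mDS : measurable (D `&` S) by exact: measurableI.
have mDS' : measurable (D `&` ~` S) by apply: measurableI => //; exact: measurableC.
have -> : \int[m]_(x in D) f x =
    \int[m]_(x in D `&` S) f x + \int[m]_(x in D `&` ~` S) f x.
  rewrite -ge0_integral_setU //; last first.
  - by rewrite disj_set2E; apply/eqP; rewrite setIACA setICr setI0.
  - exact: measurable_funTS.
  - by rewrite -setIUr setUv setIT.
rewrite (null_set_integral _ _ DS0) ?adde0 -?integral_cst //; last first.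
  exact: measurable_funTS.
by apply: ge0_le_integral => //; [exact: measurable_funTS|move=> x []; exact: fC].
Qed.

Lemma measureC_le (B : set T) (c : R) :
  measurable B -> m setT = 1 -> c%:E <= m B -> m (~` B) <= (1 - c)%:E.
Proof.
move=> mB m1 cB.
have mB1 : m B <= 1 by rewrite -m1 le_measure ?inE.
have mBfin : m B \is a fin_num by rewrite ge0_fin_numE // (le_lt_trans mB1) ?ltey.
have -> : m (~` B) = 1 - m B.
  by rewrite -m1 -(setvU B) measureU ?addeK ?setICl //; exact: measurableC.
by rewrite EFinB leeB // lee_fin.
Qed.

End measure_bounds.

Section chain_iterates.
Local Open Scope ereal_scope.
Variables (R : realType) (d : nat) (K : R.-pker (d.-tuple R) ~> (d.-tuple R)).
Local Notation E := (d.-tuple R).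

Lemma mc_iter_ge0 (As : seq (set E)) (y : E) : 0 <= mc_iter K As y.
Proof. by elim: As y => [|A As IH] y /=; [exact: lee01|exact: integral_ge0]. Qed.

Lemma measurable_mc_iter (As : seq (set E)) :
  (forall A, A \in As -> measurable A) -> measurable_fun setT (mc_iter K As).
Proof.
elim: As => [_|A As IH mAs] /=; first exact: measurable_cst.
have mA : measurable A by apply: mAs; rewrite mem_head.
have -> : (fun y => \int[K y]_(z in A) mc_iter K As z) =
          (fun y => \int[K y]_z (mc_iter K As \_ A) z).
  by apply: funext => y; rewrite integral_mkcond.
apply: measurable_fun_integral_kernel.
- by move=> U mU; exact: measurable_kernel.
- by move=> z; apply: erestrict_ge0 => t _; exact: mc_iter_ge0.
apply: (measurable_restrictT _ mA).1; apply: measurable_funTS; apply: IH => B B_As.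
by apply: mAs; rewrite in_cons B_As orbT.
Qed.

Lemma mc_iter_nseq_le (M A : set E) (r : R) :
  measurable M -> measurable A -> (0 <= r)%R ->
  (forall y, M y -> K y (~` M) = 0) -> (forall y, M y -> K y A <= r%:E) ->
  forall n y, M y -> mc_iter K (nseq n A) y <= (r ^+ n)%:E.
Proof.
move=> mM mA r0 KM KA; elim=> [|n IH] y My /=; first by rewrite expr0.
have KAM : K y (A `&` ~` M) = 0.
  apply: subset_measure0 (KM y My) => //; last exact: measurableC.
  by apply: measurableI => //; exact: measurableC.
apply: le_trans (ge0_integral_le_conull mA mM KAM _ (mc_iter_ge0 _) _
  (fun z _ Mz => IH z Mz)) _.
- by apply: measurable_mc_iter => B; rewrite mem_nseq => /andP[_ /eqP ->].
- exact: exprn_ge0.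
rewrite exprSr EFinM lee_wpmul2l ?lee_fin ?exprn_ge0 //.
apply: le_trans (KA y My); apply: le_measure; rewrite ?inE //.
exact: measurableI.
Qed.

End chain_iterates.

Section kernel_with_density.
Local Open Scope ereal_scope.
Variables (R : realType) (d : nat) (K : R.-pker (d.-tuple R) ~> (d.-tuple R)).
Variables (nu : {measure set (d.-tuple R) -> \bar R}) (M : set (d.-tuple R)).
Variable kd : d.-tuple R -> d.-tuple R -> R.
Hypothesis mkd : forall x, M x -> measurable_fun setT (kd x).
Hypothesis Kkd : forall x, M x -> forall A, measurable A ->
  K x A = \int[nu]_(y in A) (kd x y)%:E.

Lemma kernel_density_null x A : M x -> measurable A -> nu A = 0 -> K x A = 0.
Proof.
move=> Mx mA nuA; rewrite Kkd //; apply: null_set_integral => //.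
by apply/measurable_EFinP; exact: measurable_funTS (mkd Mx).
Qed.

Lemma kernel_density_ge (kappa : R) x A : measurable M -> (0 <= kappa)%R ->
  (forall y, M y -> (kappa <= kd x y)%R) -> M x -> measurable A ->
  kappa%:E * nu (A `&` M) <= K x A.
Proof.
move=> mM kappa0 kdx Mx mA; have mAM : measurable (A `&` M) by exact: measurableI.
apply: (@le_trans _ _ (K x (A `&` M))); last by apply: le_measure; rewrite ?inE.
rewrite Kkd // -integral_cst //; apply: ge0_le_integral => //.
- by apply/measurable_EFinP; exact: measurable_funTS (mkd Mx).
- by move=> z [_ Mz]; rewrite lee_fin kdx.
Qed.

End kernel_with_density.

Lemma Vd_ball_le (R : realType) (d : nat) (nu : {measure set (d.-tuple R) -> \bar R})
    (M : set (d.-tuple R)) (b eps0 eps : R) (x : d.-tuple R) :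
  M x -> 0 < eps < eps0 ->
  ((eps `^ b * fine (Vd nu M b eps0))%:E <= nu (euclid_ball x eps `&` M))%E.
Proof.
move=> Mx epsI; have eps_gt0 : 0 < eps by case/andP: epsI.
have : (Vd nu M b eps0 <= (eps `^ (- b))%:E * nu (euclid_ball x eps `&` M))%E.
  by apply: ereal_inf_lbound; exists x, eps.
(* [fine] sends the two infinite cases to [0], where the bound is trivial. *)
case: (Vd nu M b eps0) => [V| |] /= VB; rewrite ?mulr0 //.
rewrite -[leRHS]mul1e -(mulfV (lt0r_neq0 (powR_gt0 b eps_gt0))) -powRN !EFinM -muleA.
by rewrite lee_pmul2l ?lte_fin ?powR_gt0.
Qed.

Lemma avoid_ball_cylinder (R : realType) (d : nat) (d0 : measure_display)
    (Omega : measurableType d0) (X : nat -> Omega -> d.-tuple R)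
    (x : d.-tuple R) (eps : R) (k : nat) :
  [set w | forall i, (1 <= i <= k)%N -> eps < euclid_dist (X i w) x] =
  [set w | setT (X 0%N w) /\ forall i, (i < size (nseq k (~` euclid_ball x eps)))%N ->
             nth setT (nseq k (~` euclid_ball x eps)) i (X i.+1 w)].
Proof.
apply/seteqP; split => w /=.
  move=> far; split => // i; rewrite size_nseq => ik; rewrite nth_nseq ik /euclid_ball /=.
  by apply/negP; rewrite -ltNge euclid_distC; apply: far; rewrite ltnS ik.
move=> [_ far] [//|i] /andP[_ ik]; have := far i.
rewrite size_nseq nth_nseq ik /euclid_ball /= => /(_ isT) /negP.
by rewrite -ltNge euclid_distC.
Qed.

Theorem lemma7p2 (R : realType) (d : nat)
  (d0 : measure_display) (Omega : measurableType d0) (P : probability Omega R)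
  (X : nat -> Omega -> d.-tuple R)
  (mu : probability (d.-tuple R) R) (K : R.-pker (d.-tuple R) ~> (d.-tuple R))
  (nu : {measure set (d.-tuple R) -> \bar R})
  (kd : d.-tuple R -> d.-tuple R -> R) (b eps0 kappa : R) :
  (* X is a homogeneous Markov chain with kernel K, started from mu (P = P_mu) *)
  markov_chain P X mu K ->
  (* (A1): mu invariant for K, with compact support M *)
  kernel_invariant mu K ->
  euclid_compact (msupport mu) ->
  (* (A2): K(x,dy) = k(x,y) nu(dy) for x in M, nu a positive measure on M *)
  nu (~` msupport mu) = 0%E ->
  (forall x, msupport mu x -> measurable_fun setT (kd x)) ->
  (forall x y, msupport mu x -> msupport mu y -> 0 < kd x y) ->
  (forall x, msupport mu x -> forall A, measurable A ->
     K x A = (\int[nu]_(y in A) (kd x y)%:E)%E) ->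
  0 < b -> 0 < eps0 ->
  (0 < Vd nu (msupport mu) b eps0)%E ->
  0 < kappa ->
  (forall x y, msupport mu x -> msupport mu y -> kappa <= kd x y) ->
  forall (eps : R) (k : nat), 0 < eps < eps0 -> (1 <= k)%N ->
    (ereal_sup [set P [set w | forall i, (1 <= i <= k)%N -> (eps < euclid_dist (X i w) x)%R]
                | x in msupport mu]
     <= ((1 - kappa * eps `^ b *
           fine (Vd nu (msupport mu) b eps0))
         ^+ k)%:E)%E.
Proof.
move=> [_ chain] _ _ nuMC mkd _ Kkd _ _ _ kappa_gt0 kd_ge eps k epsI _.
set M := msupport mu; set c := kappa * eps `^ b * fine (Vd nu M b eps0).
have mM : measurable M := measurable_msupport mu.
apply: ge_ereal_sup => _ [x Mx <-].
have mB : measurable (euclid_ball x eps).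
  by apply: measurable_euclid_ball; case/andP: epsI => /ltW.
have ball_ge y : M y -> (c%:E <= K y (euclid_ball x eps))%E.
  move=> My; have kd_ge_y z : M z -> kappa <= kd y z by exact: kd_ge.
  apply: le_trans (kernel_density_ge mkd Kkd mM (ltW kappa_gt0) kd_ge_y My mB).
  by rewrite /c -mulrA EFinM lee_pmul2l ?lte_fin ?Vd_ball_le.
have one_sub_c_ge0 : 0 <= 1 - c.
  rewrite subr_ge0 -lee_fin (le_trans (ball_ge x Mx)) // -(prob_kernel (s:=K) x).
  by apply: le_measure; rewrite ?inE.
have avoid_le y : M y -> (K y (~` euclid_ball x eps) <= (1 - c)%:E)%E.
  by move=> My; apply: measureC_le => //; [exact: prob_kernel|exact: ball_ge].
have iter_le := mc_iter_nseq_le mM (measurableC mB) one_sub_c_ge0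
  (fun y My => kernel_density_null mkd Kkd My (measurableC mM) nuMC) avoid_le k.
have mAs A : A \in nseq k (~` euclid_ball x eps) -> measurable A.
  by rewrite mem_nseq => /andP[_ /eqP ->]; exact: measurableC.
rewrite avoid_ball_cylinder chain //.
apply: le_trans (ge0_integral_le_conull measurableT mM _ _ (mc_iter_ge0 _ _) _
  (fun y _ My => iter_le y My)) _.
- by rewrite setTI; exact: msupportC_null.
- exact: measurable_mc_iter.
- exact: exprn_ge0.
by rewrite -[leRHS]mule1 lee_wpmul2l ?lee_fin ?exprn_ge0 ?probability_le1 ?setTI.
Qed.
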